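(* Let $\mathcal R'$ be a set of rows with the consecutive-ones property, $\pi$ a consecutive-ones ordering of $\mathcal R'$, and $Z$ a row such that $\mathcal R'\cup\{Z\}$ does not have the consecutive-ones property. Let $\mathcal R_Q$ be an overlap component of $\mathcal R'$ containing at least one row that meets $Z$. Let $A'$ be a row of $\mathcal R_Q$ meeting $Z$ whose right endpoint (last column in $\pi$) is leftmost among all rows of $\mathcal R_Q$ meeting $Z$, and let $B'$ be a row of $\mathcal R_Q$ meeting $Z$ whose left endpoint (first column in $\pi$) is rightmost among all rows of $\mathcal R_Q$ meeting $Z$. Then $\mathcal R_Q$ contains a suitable pair for $Z$ with respect to $\pi$ if and only if there is a column $c\notin Z$ lying in $\pi$ strictly after the right endpoint of $A'$ and strictly before the left endpoint of $B'$; in that case $\{A',B'\}$ is a suitable pair for $Z$ with respect to $\pi$.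
   Context: Each row is identified with the set of columns in which it has a 1. A consecutive-ones ordering of a set of rows is an ordering of all columns in which each of these rows occupies consecutive columns; a set of rows has the consecutive-ones property if such an ordering exists. Two rows overlap if they intersect and neither is a subset of the other; an overlap component of a set of rows is the vertex set of a connected component of the graph whose edges join overlapping rows. Suitable pair: distinct rows $A,B\in\mathcal R'$ form a suitable pair for $Z$ with respect to $\pi$ if they belong to the same overlap component of $\mathcal R'$, $A\cap Z\neq\emptyset$, $B\cap Z\neq\emptyset$, and there is a column $c\notin Z$ such that in $\pi$ every column of one of $A,B$ precedes $c$ and $c$ precedes every column of the other. *)

From mathcomp Require Import all_boot.
Set Implicit Arguments. Unset Strict Implicit. Unset Printing Implicit Defensive.

(* Columns form a finite type T; a row is the set of columns where it has a 1
   ({set T}); a set of rows is a {set {set T}}.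
   An ordering of all columns is a duplicate-free sequence s containing every
   column; the position of column x is index x s. *)

Definition col_ordering (T : finType) (s : seq T) : Prop :=
  uniq s /\ forall x : T, x \in s.

Definition consecutive_in (T : finType) (s : seq T) (A : {set T}) : Prop :=
  forall x y z : T, x \in A -> y \in A ->
    index x s <= index z s -> index z s <= index y s -> z \in A.

Definition C1_ordering (T : finType) (R : {set {set T}}) (s : seq T) : Prop :=
  col_ordering s /\ forall A, A \in R -> consecutive_in s A.

Definition C1P (T : finType) (R : {set {set T}}) : Prop :=
  exists s : seq T, C1_ordering R s.

Definition overlap (T : finType) (A B : {set T}) : bool :=
  [&& A :&: B != set0, ~~ (A \subset B) & ~~ (B \subset A)].

Definition overlap_rel (T : finType) (R : {set {set T}}) : rel {set T} :=
  fun A B => [&& A \in R, B \in R & overlap A B].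

Definition overlap_component (T : finType) (R : {set {set T}})
    (RQ : {set {set T}}) : Prop :=
  exists2 A, A \in R & RQ = [set B in R | connect (overlap_rel R) A B].

(* right (last) and left (first) endpoint positions of a (nonempty) row *)
Definition rend (T : finType) (s : seq T) (A : {set T}) : nat :=
  \max_(x in A) index x s.
Definition lend (T : finType) (s : seq T) (A : {set T}) : nat :=
  \big[minn/size s]_(x in A) index x s.

Definition suitable_pair (T : finType) (R : {set {set T}}) (Z : {set T})
    (s : seq T) (A B : {set T}) : Prop :=
  [/\ A \in R, B \in R & A != B] /\
  (exists RQ, [/\ overlap_component R RQ, A \in RQ & B \in RQ]) /\
  (A :&: Z != set0 /\ B :&: Z != set0) /\
  exists2 c : T, c \notin Z &
    (forall x y, x \in A -> y \in B -> index x s < index c s < index y s) \/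
    (forall x y, x \in B -> y \in A -> index x s < index c s < index y s).

From mathcomp Require Import all_boot.
Set Implicit Arguments.
Unset Strict Implicit.
Unset Printing Implicit Defensive.

(* A column c separates two nonempty rows A and B (every column
   of A precedes c, which precedes every column of B) exactly when
   rend A < pos c < lend B.  Moving from an arbitrary pair of rows of R_Q
   meeting Z to the extremal pair (A', B') can only decrease the right
   endpoint on the left and increase the left endpoint on the right, so any
   column separating some pair of R_Q (in either order) separates A' from
   B'.  Conversely a column c with rend A' < pos c < lend B' separates A'
   from B', which are then distinct (a nonempty row has lend <= rend) and
   belong to the common overlap component R_Q: a suitable pair. *)

Definition separates (T : finType) (s : seq T) (c : T) (A B : {set T}) : Prop :=
  forall x y, x \in A -> y \in B -> index x s < index c s < index y s.

Section Endpoints.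
Variables (T : finType) (s : seq T).

Lemma rend_ge (A : {set T}) x : x \in A -> index x s <= rend s A.
Proof. by move=> Ax; apply: leq_bigmax_cond. Qed.

Lemma lend_le (A : {set T}) x : x \in A -> lend s A <= index x s.
Proof.
move=> Ax; rewrite /lend; elim: (index_enum T) (mem_index_enum x) => //= y r IH.
rewrite inE big_cons => /predU1P[<-|x_r]; first by rewrite Ax geq_minl.
by case: (y \in A); rewrite ?geq_min IH ?orbT.
Qed.

(* For a nonempty row the right endpoint is attained, so a strict bound on
   all columns bounds the endpoint. *)
Lemma rend_lt (A : {set T}) k :
  A != set0 -> (forall x, x \in A -> index x s < k) -> rend s A < k.
Proof.
move=> /set0Pn/card_gt0P nzA ltAk; rewrite /rend.
by have [x Ax ->] := eq_bigmax_cond (fun y => index y s) nzA; apply: ltAk.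
Qed.

(* Dually for the left endpoint; the bound k must be a position of s, since
   the minimum over an empty row is size s. *)
Lemma lend_gt (A : {set T}) k :
  k < size s -> (forall x, x \in A -> k < index x s) -> k < lend s A.
Proof.
move=> ks ltkA; rewrite /lend; apply: (big_ind (fun m => k < m)) => //.
by move=> m n km kn; rewrite leq_min km kn.
Qed.

Lemma separatesE (c : T) (A B : {set T}) :
  c \in s -> A != set0 -> B != set0 ->
  separates s c A B <-> rend s A < index c s < lend s B.
Proof.
move=> cs /set0Pn[a Aa] /set0Pn[b Bb]; split=> [sepAB | /andP[lt_rA lt_lB]].
  apply/andP; split.
    by apply: rend_lt; [apply/set0Pn; exists a | move=> x /sepAB/(_ Bb)/andP[]].
  by apply: lend_gt; [rewrite index_mem | move=> y /(sepAB a _ Aa)/andP[]].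
move=> x y Ax By; apply/andP; split.
  exact: leq_ltn_trans (rend_ge Ax) lt_rA.
exact: leq_trans lt_lB (lend_le By).
Qed.

Lemma separates_neq (c : T) (A B : {set T}) :
  A != set0 -> separates s c A B -> A != B.
Proof.
move=> /set0Pn[a Aa] sepAB; apply/eqP=> eqAB; subst B.
by have /andP[lt_ac lt_ca] := sepAB a a Aa Aa; rewrite ltnNge ltnW in lt_ca.
Qed.

End Endpoints.

Lemma meets_neq0 (T : finType) (A Z : {set T}) : A :&: Z != set0 -> A != set0.
Proof.
by move=> /set0Pn[x]; rewrite inE => /andP[Ax _]; apply/set0Pn; exists x.
Qed.

Lemma overlap_component_sub (T : finType) (R RQ : {set {set T}}) A :
  overlap_component R RQ -> A \in RQ -> A \in R.
Proof. by case=> A0 _ ->; rewrite inE => /andP[]. Qed.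

Section ExtremalPair.
Variables (T : finType) (R RQ : {set {set T}}) (s : seq T) (Z A' B' : {set T}).
Hypothesis s_full : forall x : T, x \in s.
Hypothesis RQ_comp : overlap_component R RQ.
Hypotheses (RQ_A' : A' \in RQ) (Z_A' : A' :&: Z != set0).
Hypotheses (RQ_B' : B' \in RQ) (Z_B' : B' :&: Z != set0).
Hypothesis A'_min : forall A, A \in RQ -> A :&: Z != set0 -> rend s A' <= rend s A.
Hypothesis B'_max : forall B, B \in RQ -> B :&: Z != set0 -> lend s B <= lend s B'.

Lemma separates_extremal (c : T) (A B : {set T}) :
  A \in RQ -> B \in RQ -> A :&: Z != set0 -> B :&: Z != set0 ->
  separates s c A B -> rend s A' < index c s < lend s B'.
Proof.
move=> RQ_A RQ_B Z_A Z_B.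
move/(separatesE (s_full c) (meets_neq0 Z_A) (meets_neq0 Z_B))=> /andP[lt_rA lt_lB].
apply/andP; split; first exact: leq_ltn_trans (A'_min RQ_A Z_A) lt_rA.
exact: leq_trans lt_lB (B'_max RQ_B Z_B).
Qed.

Lemma extremal_suitable (c : T) :
  c \notin Z -> rend s A' < index c s < lend s B' -> suitable_pair R Z s A' B'.
Proof.
move=> Zc /(separatesE (s_full c) (meets_neq0 Z_A') (meets_neq0 Z_B')) sepAB.
split; first by split; [exact: overlap_component_sub RQ_comp RQ_A'
  | exact: overlap_component_sub RQ_comp RQ_B'
  | exact: separates_neq (meets_neq0 Z_A') sepAB].
split; first by exists RQ.
by split; [split | exists c; [| left]].
Qed.

End ExtremalPair.

Theorem mainTheorem7 (T : finType) (R : {set {set T}}) (s : seq T)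
    (Z : {set T}) (RQ : {set {set T}}) (A' B' : {set T}) :
  C1_ordering R s ->
  ~ C1P (R :|: [set Z]) ->
  overlap_component R RQ ->
  (exists2 A, A \in RQ & A :&: Z != set0) ->
  A' \in RQ -> A' :&: Z != set0 ->
  (forall A, A \in RQ -> A :&: Z != set0 -> rend s A' <= rend s A) ->
  B' \in RQ -> B' :&: Z != set0 ->
  (forall B, B \in RQ -> B :&: Z != set0 -> lend s B <= lend s B') ->
  ((exists A B, [/\ A \in RQ, B \in RQ & suitable_pair R Z s A B]) <->
   (exists2 c : T, c \notin Z & rend s A' < index c s < lend s B')) /\
  ((exists2 c : T, c \notin Z & rend s A' < index c s < lend s B') ->
   suitable_pair R Z s A' B').
Proof.
move=> [[_ s_full] _] _ RQ_comp _ RQ_A' Z_A' A'_min RQ_B' Z_B' B'_max.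
have suitable_A'B' := extremal_suitable s_full RQ_comp RQ_A' Z_A' RQ_B' Z_B'.
split; last by case=> c; apply: suitable_A'B'.
split=> [[A [B [RQ_A RQ_B [_ [_ [[Z_A Z_B] [c Zc sepAB]]]]]]] | [c Zc btw]].
  exists c => //; have extremal := separates_extremal s_full A'_min B'_max.
  by case: sepAB; [apply: extremal | apply: extremal].
by exists A', B'; split=> //; apply: suitable_A'B' btw.
Qed.
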